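(* The conjugacy growth of Thompson's group $V$ is exponential.
   Context: Let $\mathfrak{C}=\{0,1\}^\omega$ be the Cantor space with the product topology. For $w_1,w_2\in\{0,1\}^*$, a homeomorphism maps $w_1\mathfrak{C}$ rigidly to $w_2\mathfrak{C}$ if it restricts to $w_1y\mapsto w_2y$. Thompson's group $V$ is the group of homeomorphisms $v$ of $\mathfrak{C}$ such that every $x\in\mathfrak{C}$ lies in a cone $w\mathfrak{C}$ that $v$ maps rigidly onto some cone; $V$ is finitely generated. The conjugacy growth function with respect to a finite generating set sends $n$ to the number of conjugacy classes containing an element of word length at most $n$. Exponential means it is $\sim$-equivalent to $n\mapsto 2^n$, where $f\sim g$ iff $f\preccurlyeq g$ and $g\preccurlyeq f$, and $f\preccurlyeq g$ means there is $\lambda\in\mathbb{N}\setminus\{0\}$ with $f(n)\le\lambda g(\lambda n+\lambda)+\lambda$ for all $n$. *)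

From Stdlib Require Import Arith List.
Import ListNotations.

Definition cantor := nat -> bool.

Definition word := list bool.

Definition wcat (w : word) (y : cantor) : cantor :=
  fun i => if i <? length w then nth i w false else y (i - length w).

Definition in_cone (w : word) (x : cantor) : Prop :=
  exists y, x = wcat w y.

(* Continuity for the product topology on {0,1}^omega (discrete factors):
   each output coordinate depends only on finitely many input coordinates. *)
Definition continuous_cantor (f : cantor -> cantor) : Prop :=
  forall (x : cantor) (n : nat), exists m : nat, forall y : cantor,
    (forall i, i < m -> y i = x i) -> forall i, i < n -> f y i = f x i.

Definition homeomorphism (f : cantor -> cantor) : Prop :=
  continuous_cantor f /\
  exists g : cantor -> cantor, continuous_cantor g /\
    (forall x, g (f x) = x) /\ (forall x, f (g x) = x).

Definition maps_rigidly (f : cantor -> cantor) (w1 w2 : word) : Prop :=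
  forall y, f (wcat w1 y) = wcat w2 y.

Definition inV (v : cantor -> cantor) : Prop :=
  homeomorphism v /\
  forall x, exists w1 w2, in_cone w1 x /\ maps_rigidly v w1 w2.

Definition is_letter (S : list (cantor -> cantor)) (t : cantor -> cantor) : Prop :=
  exists s, In s S /\
    (t = s \/ ((forall x, s (t x) = x) /\ (forall x, t (s x) = x))).

Definition eval_word (l : list (cantor -> cantor)) : cantor -> cantor :=
  fold_right (fun t acc => fun x => t (acc x)) (fun x => x) l.

Definition generating_set (S : list (cantor -> cantor)) : Prop :=
  (forall s, In s S -> inV s) /\
  (forall v, inV v -> exists l, Forall (is_letter S) l /\ v = eval_word l).

Definition in_ball (S : list (cantor -> cantor)) (n : nat) (v : cantor -> cantor) : Prop :=
  exists l, Forall (is_letter S) l /\ length l <= n /\ v = eval_word l.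

Definition conjV (g h : cantor -> cantor) : Prop :=
  exists c, inV c /\ (fun x => c (g x)) = (fun x => h (c x)).

(* k is the number of conjugacy classes of V containing an element of
   word length at most n: there is a list of k pairwise non-conjugate
   elements of the ball meeting every class that meets the ball. *)
Definition conj_count (S : list (cantor -> cantor)) (n k : nat) : Prop :=
  exists reps : list (cantor -> cantor),
    length reps = k /\
    (forall r, In r reps -> in_ball S n r) /\
    (forall i j, i < k -> j < k -> i <> j ->
       ~ conjV (nth i reps (fun x => x)) (nth j reps (fun x => x))) /\
    (forall v, in_ball S n v -> exists r, In r reps /\ conjV v r).

Definition preceq (f g : nat -> nat) : Prop :=
  exists lam : nat, 0 < lam /\ forall n, f n <= lam * g (lam * n + lam) + lam.

Definition equiv_growth (f g : nat -> nat) : Prop := preceq f g /\ preceq g f.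

From Stdlib Require Import Arith List.
From Stdlib Require Import Lia Classical ClassicalEpsilon FunctionalExtensionality.
Import ListNotations.

(* The ball of radius n has at most (2|S| + 1)^n elements, which bounds the growth
   from above.  For the lower bound, every bit string l of length n is encoded by an
   element [code l] whose sizes of periodic orbits recover l; these sizes are
   conjugacy invariants, so the 2^n elements are pairwise non-conjugate.  The
   recursion [code (b :: l) = s_b ∘ (code l acting on the cone 1C)] doubles orbit
   sizes, and since conjugating by x0 moves an action on 1C down to 11C, [code l]
   is a product of O(n) fixed generators. *)

(** * Periodic orbits *)

Definition has_period {A} (f : A -> A) (k : nat) : Prop :=
  exists x, Nat.iter k f x = x /\ forall j, 0 < j -> j < k -> Nat.iter j f x <> x.

Lemma iter_double {A} (f : A -> A) j x :
  Nat.iter (2 * j) f x = Nat.iter j (fun y => f (f y)) x.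
Proof.
  induction j as [|j IH]; [reflexivity|].
  replace (2 * S j) with (S (S (2 * j))) by lia.
  rewrite !Nat.iter_succ, IH. reflexivity.
Qed.

Lemma has_period_transport {A B} (c : A -> B) (e : A -> A) (r : B -> B) k :
  (forall x y, c x = c y -> x = y) -> (forall x, c (e x) = r (c x)) ->
  has_period e k -> has_period r k.
Proof.
  intros c_inj c_e (x & Hx & Hmin). exists (c x).
  split.
  - rewrite <- (Nat.iter_swap_gen _ _ c e r c_e), Hx. reflexivity.
  - intros j Hj Hjk Hc. rewrite <- (Nat.iter_swap_gen _ _ c e r c_e) in Hc.
    exact (Hmin j Hj Hjk (c_inj _ _ Hc)).
Qed.

Lemma has_period_conj {A B} (c : A -> B) (ci : B -> A) (e : A -> A) (r : B -> B) k :
  (forall x, ci (c x) = x) -> (forall y, c (ci y) = y) -> (forall x, c (e x) = r (c x)) ->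
  has_period e k <-> has_period r k.
Proof.
  intros cic cci c_e. split; [apply (has_period_transport c)|apply (has_period_transport ci)].
  - intros x y E. rewrite <- (cic x), <- (cic y), E. reflexivity.
  - exact c_e.
  - intros x y E. rewrite <- (cci x), <- (cci y), E. reflexivity.
  - intro y. rewrite <- (cci y) at 1. rewrite <- c_e, cic. reflexivity.
Qed.

Section PeriodDoubling.

(* [G] exchanges two disjoint copies [p0 B] and [p1 B] of [B], acting as [h] on the
   way back, and fixes everything else, so [G ∘ G] restricted to either copy is [h]. *)
Variables (A B : Type) (G : A -> A) (h : B -> B) (p0 p1 : B -> A).
Hypothesis G_p0 : forall y, G (p0 y) = p1 y.
Hypothesis G_p1 : forall y, G (p1 y) = p0 (h y).
Hypothesis p0_inj : forall y z, p0 y = p0 z -> y = z.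
Hypothesis p1_inj : forall y z, p1 y = p1 z -> y = z.
Hypothesis p0_p1_disjoint : forall y z, p0 y <> p1 z.
Hypothesis G_cover : forall x, (exists y, x = p0 y) \/ (exists y, x = p1 y) \/ G x = x.

Lemma iter_even_p0 j y : Nat.iter (2 * j) G (p0 y) = p0 (Nat.iter j h y).
Proof.
  rewrite iter_double. symmetry. apply Nat.iter_swap_gen. intro z. rewrite G_p0, G_p1. reflexivity.
Qed.

Lemma iter_even_p1 j y : Nat.iter (2 * j) G (p1 y) = p1 (Nat.iter j h y).
Proof.
  rewrite iter_double. symmetry. apply Nat.iter_swap_gen. intro z. rewrite G_p1, G_p0. reflexivity.
Qed.

Lemma has_period_of_copy (p : B -> A) j y :
  (forall y z, p y = p z -> y = z) ->
  (forall i y, Nat.iter (2 * i) G (p y) = p (Nat.iter i h y)) ->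
  Nat.iter (2 * j) G (p y) = p y ->
  (forall i, 0 < i -> i < 2 * j -> Nat.iter i G (p y) <> p y) ->
  has_period h j.
Proof.
  intros p_inj p_iter Hy Hmin. exists y. split.
  - apply p_inj. rewrite <- p_iter. exact Hy.
  - intros i Hi Hij E. apply (Hmin (2 * i)); [lia|lia|]. rewrite p_iter, E. reflexivity.
Qed.

Lemma has_period_double j : 0 < j -> has_period G (2 * j) <-> has_period h j.
Proof.
  intros Hj. split.
  - intros (x & Hx & Hmin). destruct (G_cover x) as [[y ->]|[[y ->]|Gx]].
    + exact (has_period_of_copy p0 j y p0_inj iter_even_p0 Hx Hmin).
    + exact (has_period_of_copy p1 j y p1_inj iter_even_p1 Hx Hmin).
    + exfalso. apply (Hmin 1); [lia|lia|exact Gx].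
  - intros (y & Hy & Hmin). exists (p0 y). split.
    + rewrite iter_even_p0, Hy. reflexivity.
    + intros i Hi Hij E. destruct (Nat.Even_or_Odd i) as [[m ->]|[m ->]].
      * rewrite iter_even_p0 in E. apply p0_inj in E. apply (Hmin m); [lia|lia|exact E].
      * rewrite Nat.add_1_r, Nat.iter_succ, iter_even_p0, G_p0 in E.
        exact (p0_p1_disjoint _ _ (eq_sym E)).
Qed.

End PeriodDoubling.

(** * Transversals and words *)

Definition pairwise_unrelated {A} (R : A -> A -> Prop) (l : list A) (d : A) : Prop :=
  forall i j, i < length l -> j < length l -> i <> j -> ~ R (nth i l d) (nth j l d).

Lemma pairwise_unrelated_transversal {A} (R : A -> A -> Prop) (P : A -> Prop) (d : A) :
  (forall x, R x x) -> (forall x y, R x y -> R y x) ->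
  forall B : list A, exists reps,
    (forall r, In r reps -> P r) /\ pairwise_unrelated R reps d /\
    (forall v, P v -> In v B -> exists r, In r reps /\ R v r).
Proof.
  intros R_refl R_sym B. induction B as [|x B (reps & Hin & Hpw & Hcov)].
  - exists []. split; [|split]; [intros _ []|intros i j Hi; simpl in Hi; lia|intros _ _ []].
  - destruct (classic (P x /\ ~ exists r, In r reps /\ R x r)) as [[Px Hx]|Hx].
    + exists (x :: reps). split; [|split].
      * intros r [<-|Hr]; auto.
      * intros [|i] [|j] Hi Hj Hij; simpl in *; try lia.
        -- intro E. apply Hx. exists (nth j reps d). split; [apply nth_In; lia|exact E].
        -- intro E. apply Hx. exists (nth i reps d). split; [apply nth_In; lia|auto].
        -- apply Hpw; lia.
      * intros v Pv [<-|Hv].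
        -- exists x. split; [left; reflexivity|apply R_refl].
        -- destruct (Hcov v Pv Hv) as (r & Hr & E). exists r. split; [right|]; auto.
    + exists reps. split; [|split]; auto.
      intros v Pv [<-|Hv]; auto.
      apply NNPP. intro Hn. apply Hx. split; auto.
Qed.

Lemma pairwise_unrelated_NoDup {A} (R : A -> A -> Prop) (l : list A) (d : A) :
  (forall x, R x x) -> pairwise_unrelated R l d -> NoDup l.
Proof.
  intros R_refl Hpw. apply (NoDup_nth l d). intros i j Hi Hj E.
  destruct (Nat.eq_dec i j) as [|Hij]; [assumption|].
  exfalso. apply (Hpw i j Hi Hj Hij). rewrite E. apply R_refl.
Qed.

Fixpoint words {A} (al : list A) (n : nat) : list (list A) :=
  match n with
  | 0 => [[]]
  | S n => flat_map (fun a => map (cons a) (words al n)) al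
  end.

Lemma length_words {A} (al : list A) n : length (words al n) = length al ^ n.
Proof.
  induction n as [|n IH]; [reflexivity|]. simpl. rewrite <- IH.
  apply flat_map_constant_length. intros a _. apply length_map.
Qed.

Lemma words_complete {A} (al : list A) n w : length w = n -> incl w al -> In w (words al n).
Proof.
  revert w. induction n as [|n IH]; intros [|a w] Hlen Hincl; try discriminate.
  - left. reflexivity.
  - apply in_flat_map. exists a. split; [apply Hincl; left; reflexivity|].
    apply in_map, IH; [injection Hlen; auto|]. intros b Hb. apply Hincl. right. exact Hb.
Qed.

Lemma length_in_words {A} (al : list A) n w : In w (words al n) -> length w = n.
Proof.
  revert w. induction n as [|n IH]; intros w Hw.
  - destruct Hw as [<-|[]]. reflexivity.
  - apply in_flat_map in Hw as (a & _ & Hw). apply in_map_iff in Hw as (w' & <- & Hw').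
    simpl. rewrite (IH w' Hw'). reflexivity.
Qed.

Lemma NoDup_words {A} (al : list A) n : NoDup al -> NoDup (words al n).
Proof.
  intros Hal. induction n as [|n IH]; simpl.
  - constructor; [intros []|constructor].
  - revert Hal. generalize (words al n) IH. clear IH. intros W HW.
    induction al as [|a al' IHal]; intros Hal; [constructor|].
    inversion_clear Hal as [|? ? Ha Hal'].
    apply NoDup_app; [|auto|].
    + apply NoDup_map_NoDup_ForallPairs; [|exact HW].
      intros u v _ _ E. injection E. auto.
    + intros w Hw Hw'. apply in_map_iff in Hw as (u & <- & _).
      apply in_flat_map in Hw' as (b & Hb & Hw'). apply in_map_iff in Hw' as (v & E & _).
      injection E as <- _. contradiction.
Qed.

(** * Cantor space and Thompson's group V *)

Definition ccons (b : bool) (y : cantor) : cantor :=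
  fun i => match i with 0 => b | S j => y j end.
Definition ctl (x : cantor) : cantor := fun i => x (S i).

Lemma ccons_eta x : x = ccons (x 0) (ctl x).
Proof. apply functional_extensionality. intros [|i]; reflexivity. Qed.

Lemma ccons_inj a b y z : ccons a y = ccons b z -> a = b /\ y = z.
Proof.
  intros E. split.
  - exact (f_equal (fun x => x 0) E).
  - apply functional_extensionality. intro i. exact (f_equal (fun x => x (S i)) E).
Qed.

Lemma ccons_head_neq y z : ccons false y <> ccons true z.
Proof. intros E. apply ccons_inj in E as [E _]. discriminate. Qed.

Lemma cantor_cases (P : cantor -> Prop) : (forall b y, P (ccons b y)) -> forall x, P x.
Proof. intros H x. rewrite (ccons_eta x). apply H. Qed.

Lemma cantor_cases2 (P : cantor -> Prop) :
  (forall a b y, P (ccons a (ccons b y))) -> forall x, P x.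
Proof. intros H. apply cantor_cases. intros a. apply cantor_cases. apply H. Qed.

Lemma wcat_nil y : wcat [] y = y.
Proof. apply functional_extensionality. intros [|i]; reflexivity. Qed.

Lemma wcat_cons b w y : wcat (b :: w) y = ccons b (wcat w y).
Proof. apply functional_extensionality. intros [|i]; reflexivity. Qed.

Lemma wcat_prefix w y i : i < length w -> wcat w y i = nth i w false.
Proof. unfold wcat. intros Hi. destruct (Nat.ltb_spec i (length w)); [reflexivity|lia]. Qed.

Lemma wcat_suffix w y k : wcat w y (length w + k) = y k.
Proof.
  unfold wcat. destruct (Nat.ltb_spec (length w + k) (length w)); [lia|].
  f_equal. lia.
Qed.

Lemma in_cone_nil x : in_cone [] x.
Proof. exists x. rewrite wcat_nil. reflexivity. Qed.

Lemma in_cone_1 a y : in_cone [a] (ccons a y).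
Proof. exists y. rewrite wcat_cons, wcat_nil. reflexivity. Qed.

Lemma in_cone_2 a b y : in_cone [a; b] (ccons a (ccons b y)).
Proof. exists y. rewrite !wcat_cons, wcat_nil. reflexivity. Qed.

Definition rigid_cover (f : cantor -> cantor) : Prop :=
  forall x, exists w1 w2, in_cone w1 x /\ maps_rigidly f w1 w2.

Lemma rigid_cover_continuous f : rigid_cover f -> continuous_cantor f.
Proof.
  intros Hf x n. destruct (Hf x) as (w1 & w2 & [y ->] & Hr).
  exists (length w1 + n). intros z Hz.
  set (z' := fun k => z (length w1 + k)).
  assert (Ez : z = wcat w1 z').
  { apply functional_extensionality. intro i.
    destruct (Nat.lt_ge_cases i (length w1)) as [Hi|Hi].
    - rewrite wcat_prefix, Hz, wcat_prefix by lia. reflexivity.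
    - replace i with (length w1 + (i - length w1)) by lia. rewrite wcat_suffix. reflexivity. }
  intros i Hi. rewrite Ez, !Hr. unfold wcat.
  destruct (Nat.ltb_spec i (length w2)); [reflexivity|].
  unfold z'. rewrite Hz, wcat_suffix by lia. reflexivity.
Qed.

Lemma inV_intro f g :
  (forall x, f (g x) = x) -> (forall x, g (f x) = x) -> rigid_cover f -> rigid_cover g -> inV f.
Proof.
  intros fg gf Hf Hg. split; [split|exact Hf].
  - apply rigid_cover_continuous. exact Hf.
  - exists g. split; [apply rigid_cover_continuous; exact Hg|auto].
Qed.

Lemma inV_id : inV (fun x => x).
Proof.
  assert (R : rigid_cover (fun x => x)).
  { intro x. exists [], []. split; [apply in_cone_nil|intro y; reflexivity]. }
  apply (inV_intro _ _ (fun _ => eq_refl) (fun _ => eq_refl) R R).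
Qed.

Lemma inV_inverse c ci : inV c -> (forall x, ci (c x) = x) -> (forall x, c (ci x) = x) -> inV ci.
Proof.
  intros [_ Hc] cic cci. apply (inV_intro ci c cic cci); [|exact Hc].
  intro x. destruct (Hc (ci x)) as (w1 & w2 & [y Hy] & Hr). exists w2, w1. split.
  - exists y. rewrite <- Hr, <- Hy, cci. reflexivity.
  - intro z. rewrite <- Hr, cic. reflexivity.
Qed.

Lemma conjV_refl g : conjV g g.
Proof. exists (fun x => x). split; [exact inV_id|reflexivity]. Qed.

Lemma conjV_sym g h : conjV g h -> conjV h g.
Proof.
  intros (c & Hc & E). pose proof Hc as [[_ (ci & _ & cic & cci)] _].
  assert (E' : forall x, c (g x) = h (c x)) by (intro x; exact (f_equal (fun F => F x) E)).
  exists ci. split; [exact (inV_inverse c ci Hc cic cci)|].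
  apply functional_extensionality. intro x.
  rewrite <- (cci x) at 1. rewrite <- E', cic. reflexivity.
Qed.

Lemma has_period_conjV e r k : conjV e r -> has_period e k <-> has_period r k.
Proof.
  intros (c & [[_ (ci & _ & cic & cci)] _] & E).
  apply (has_period_conj c ci); auto.
  intro x. exact (f_equal (fun F => F x) E).
Qed.

Definition flip (x : cantor) : cantor := ccons (negb (x 0)) (ctl x).

Definition on_right (h : cantor -> cantor) (x : cantor) : cantor :=
  if x 0 then ccons true (h (ctl x)) else x.

Definition swap_1_01 (x : cantor) : cantor :=
  if x 0 then ccons false (ccons true (ctl x))
  else if x 1 then ccons true (ctl (ctl x)) else x.

(* Thompson's generator x0 of F: 0 -> 00, 10 -> 01, 11 -> 1. *)
Definition x0 (x : cantor) : cantor :=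
  if x 0 then (if x 1 then ctl x else ccons false (ccons true (ctl (ctl x))))
  else ccons false x.

Definition x0_inv (x : cantor) : cantor :=
  if x 0 then ccons true x
  else if x 1 then ccons true (ccons false (ctl (ctl x))) else ctl x.

Lemma flip_involutive x : flip (flip x) = x.
Proof. revert x. apply cantor_cases. intros [|] y; reflexivity. Qed.

Lemma swap_1_01_involutive x : swap_1_01 (swap_1_01 x) = x.
Proof. revert x. apply cantor_cases2. intros [|] [|] y; reflexivity. Qed.

Lemma x0_x0_inv x : x0 (x0_inv x) = x.
Proof. revert x. apply cantor_cases2. intros [|] [|] y; reflexivity. Qed.

Lemma x0_inv_x0 x : x0_inv (x0 x) = x.
Proof. revert x. apply cantor_cases2. intros [|] [|] y; reflexivity. Qed.

Lemma on_right_id x : on_right (fun y => y) x = x.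
Proof. revert x. apply cantor_cases. intros [|] y; reflexivity. Qed.

Lemma on_right_comp f g x : on_right (fun y => f (g y)) x = on_right f (on_right g x).
Proof. revert x. apply cantor_cases. intros [|] y; reflexivity. Qed.

Lemma on_right_cancel f g : (forall y, f (g y) = y) -> forall x, on_right f (on_right g x) = x.
Proof. intros fg x. rewrite <- on_right_comp, <- on_right_id. f_equal. apply functional_extensionality. exact fg. Qed.

(* Conjugating by x0 pushes the support one level deeper, so iterated [on_right]
   costs only a bounded number of generators per level. *)
Lemma on_right_twice h x : on_right (on_right h) x = x0_inv (on_right h (x0 x)).
Proof. revert x. apply cantor_cases2. intros [|] [|] y; reflexivity. Qed.

Ltac solve_rigid := let y := fresh "y" in intro y; rewrite ?wcat_cons, ?wcat_nil; reflexivity.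

Lemma rigid_cover_flip : rigid_cover flip.
Proof.
  unfold rigid_cover. apply cantor_cases. intros a y.
  exists [a], [negb a]. split; [apply in_cone_1|solve_rigid].
Qed.

Lemma rigid_cover_swap_1_01 : rigid_cover swap_1_01.
Proof.
  unfold rigid_cover. apply cantor_cases2. intros [|] [|] y.
  - exists [true], [false; true]. split; [apply in_cone_1|solve_rigid].
  - exists [true], [false; true]. split; [apply in_cone_1|solve_rigid].
  - exists [false; true], [true]. split; [apply in_cone_2|solve_rigid].
  - exists [false; false], [false; false]. split; [apply in_cone_2|solve_rigid].
Qed.

Lemma rigid_cover_x0 : rigid_cover x0.
Proof.
  unfold rigid_cover. apply cantor_cases2. intros [|] [|] y.
  - exists [true; true], [true]. split; [apply in_cone_2|solve_rigid].
  - exists [true; false], [false; true]. split; [apply in_cone_2|solve_rigid].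
  - exists [false], [false; false]. split; [apply in_cone_1|solve_rigid].
  - exists [false], [false; false]. split; [apply in_cone_1|solve_rigid].
Qed.

Lemma rigid_cover_x0_inv : rigid_cover x0_inv.
Proof.
  unfold rigid_cover. apply cantor_cases2. intros [|] [|] y.
  - exists [true], [true; true]. split; [apply in_cone_1|solve_rigid].
  - exists [true], [true; true]. split; [apply in_cone_1|solve_rigid].
  - exists [false; true], [true; false]. split; [apply in_cone_2|solve_rigid].
  - exists [false; false], [false]. split; [apply in_cone_2|solve_rigid].
Qed.

Lemma rigid_cover_on_right h : rigid_cover h -> rigid_cover (on_right h).
Proof.
  intros Hh. unfold rigid_cover. apply cantor_cases. intros [|] y.
  - destruct (Hh y) as (w1 & w2 & [z ->] & Hr). exists (true :: w1), (true :: w2). split.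
    + exists z. rewrite wcat_cons. reflexivity.
    + intro z'. rewrite !wcat_cons. cbn. rewrite <- Hr. reflexivity.
  - exists [false], [false]. split; [apply in_cone_1|solve_rigid].
Qed.

Lemma inV_flip : inV flip.
Proof. exact (inV_intro _ _ flip_involutive flip_involutive rigid_cover_flip rigid_cover_flip). Qed.

Lemma inV_swap_1_01 : inV swap_1_01.
Proof.
  exact (inV_intro _ _ swap_1_01_involutive swap_1_01_involutive
           rigid_cover_swap_1_01 rigid_cover_swap_1_01).
Qed.

Lemma inV_x0 : inV x0.
Proof. exact (inV_intro _ _ x0_x0_inv x0_inv_x0 rigid_cover_x0 rigid_cover_x0_inv). Qed.

Lemma inV_x0_inv : inV x0_inv.
Proof. exact (inV_intro _ _ x0_inv_x0 x0_x0_inv rigid_cover_x0_inv rigid_cover_x0). Qed.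

Lemma inV_on_right h : inV h -> inV (on_right h).
Proof.
  intros Hh. pose proof Hh as [[_ (g & _ & hg & gh)] Hr].
  apply (inV_intro _ (on_right g)); try apply on_right_cancel; auto.
  - apply rigid_cover_on_right. exact Hr.
  - apply rigid_cover_on_right. exact (proj2 (inV_inverse h g Hh hg gh)).
Qed.

(** * Elements with prescribed periodic orbits *)

Definition code_step (b : bool) : cantor -> cantor := if b then swap_1_01 else flip.

(* [code l] has a periodic orbit of size [2^i] exactly when the [i]-th bit of [l] is
   set, and always one of size [2^(length l)]. *)
Fixpoint code (l : list bool) : cantor -> cantor :=
  match l with
  | [] => fun x => x
  | b :: l => fun x => code_step b (on_right (code l) x)
  end.

Lemma code_period_double b l j : 0 < j -> has_period (code (b :: l)) (2 * j) <-> has_period (code l) j.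
Proof.
  destruct b.
  - apply (has_period_double _ _ _ _ (fun y => ccons false (ccons true y)) (ccons true));
      try reflexivity.
    + intros y z E. apply ccons_inj in E as [_ E]. apply ccons_inj in E as [_ E]. exact E.
    + intros y z E. apply ccons_inj in E as [_ E]. exact E.
    + intros y z. apply ccons_head_neq.
    + apply cantor_cases2. intros [|] [|] y.
      * right; left. exists (ccons true y). reflexivity.
      * right; left. exists (ccons false y). reflexivity.
      * left. exists y. reflexivity.
      * right; right. reflexivity.
  - apply (has_period_double _ _ _ _ (ccons false) (ccons true)); try reflexivity.
    + intros y z E. apply ccons_inj in E as [_ E]. exact E.
    + intros y z E. apply ccons_inj in E as [_ E]. exact E.
    + intros y z. apply ccons_head_neq.
    + apply cantor_cases. intros [|] y.
      * right; left. exists y. reflexivity.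
      * left. exists y. reflexivity.
Qed.

Lemma code_fixed_point b l : has_period (code (b :: l)) 1 <-> b = true.
Proof.
  split.
  - intros (x & Hx & _). destruct b; [reflexivity|exfalso].
    rewrite (ccons_eta x) in Hx. apply ccons_inj in Hx as [E _]. destruct (x 0); discriminate.
  - intros ->. exists (ccons false (ccons false (fun _ => false))).
    split; [reflexivity|intros; lia].
Qed.

Lemma code_injective l l' : length l = length l' ->
  (forall k, 0 < k -> has_period (code l) k <-> has_period (code l') k) -> l = l'.
Proof.
  revert l'. induction l as [|b l IH]; intros [|b' l'] Hlen Hper; try discriminate; auto.
  assert (b = b') as <-.
  { pose proof (Hper 1 Nat.lt_0_1) as H1. rewrite !code_fixed_point in H1.
    destruct b, b'; intuition. }
  f_equal. apply IH; [injection Hlen; auto|].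
  intros k Hk. rewrite <- (code_period_double b l k Hk), <- (code_period_double b l' k Hk).
  apply Hper. lia.
Qed.

(** * Word length *)

Lemma eval_word_app l1 l2 : eval_word (l1 ++ l2) = fun x => eval_word l1 (eval_word l2 x).
Proof. induction l1 as [|a l1 IH]; [reflexivity|]. simpl. rewrite IH. reflexivity. Qed.

Lemma in_ball_id S : in_ball S 0 (fun x => x).
Proof. exists []. split; [constructor|split; reflexivity]. Qed.

Lemma in_ball_mono S m n v : m <= n -> in_ball S m v -> in_ball S n v.
Proof. intros Hmn (l & Hl & Hlen & ->). exists l. repeat split; auto. lia. Qed.

Lemma in_ball_comp S m n u v :
  in_ball S m u -> in_ball S n v -> in_ball S (m + n) (fun x => u (v x)).
Proof.
  intros (l1 & F1 & L1 & ->) (l2 & F2 & L2 & ->). exists (l1 ++ l2). repeat split.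
  - apply Forall_app. auto.
  - rewrite length_app. lia.
  - rewrite eval_word_app. reflexivity.
Qed.

Lemma in_ball_uniform S vs : generating_set S -> (forall v, In v vs -> inV v) ->
  exists c, forall v, In v vs -> in_ball S c v.
Proof.
  intros [_ HS]. induction vs as [|v vs IH]; intros Hvs.
  - exists 0. intros _ [].
  - destruct (HS v (Hvs v (or_introl eq_refl))) as (l & Hl & ->).
    destruct IH as [c Hc]; [intros u Hu; apply Hvs; right; exact Hu|].
    exists (max (length l) c). intros u [<-|Hu].
    + exists l. repeat split; auto. lia.
    + apply (in_ball_mono _ c); [lia|auto].
Qed.

Definition code_generators : list (cantor -> cantor) :=
  [flip; swap_1_01; on_right flip; on_right swap_1_01; x0; x0_inv].

Lemma inV_code_generators v : In v code_generators -> inV v.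
Proof.
  intros Hv. repeat destruct Hv as [<-|Hv]; try contradiction;
    auto using inV_flip, inV_swap_1_01, inV_on_right, inV_x0, inV_x0_inv.
Qed.

Lemma on_right_code_cons b l x :
  on_right (code (b :: l)) x = on_right (code_step b) (x0_inv (on_right (code l) (x0 x))).
Proof. rewrite <- on_right_twice, <- on_right_comp. reflexivity. Qed.

Lemma code_in_ball S c : (forall v, In v code_generators -> in_ball S c v) ->
  forall l, in_ball S (c + 3 * c * length l) (code l).
Proof.
  intros Hc.
  assert (Hstep : forall b, in_ball S c (code_step b) /\ in_ball S c (on_right (code_step b))).
  { intros []; split; apply Hc; simpl; tauto. }
  assert (Hright : forall l, in_ball S (3 * c * length l) (on_right (code l))).
  { induction l as [|b l IH].
    - replace (on_right (code [])) with (fun x : cantor => x)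
        by (apply functional_extensionality; intro x; symmetry; apply on_right_id).
      apply (in_ball_mono _ 0); [lia|apply in_ball_id].
    - replace (on_right (code (b :: l))) with
        (fun x => on_right (code_step b) (x0_inv (on_right (code l) (x0 x))))
        by (apply functional_extensionality; intro x; symmetry; apply on_right_code_cons).
      apply (in_ball_mono _ (c + (c + (3 * c * length l + c)))); [simpl length; lia|].
      apply in_ball_comp; [apply Hstep|].
      apply in_ball_comp; [apply Hc; simpl; tauto|].
      apply in_ball_comp; [exact IH|apply Hc; simpl; tauto]. }
  intros [|b l].
  - apply (in_ball_mono _ 0); [lia|apply in_ball_id].
  - apply (in_ball_mono _ (c + 3 * c * length l)); [simpl length; lia|].
    apply (in_ball_comp S _ _ (code_step b) (on_right (code l))); [apply Hstep|apply Hright].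
Qed.

(** * Counting conjugacy classes *)

(* The inverse of a bijection is unique, so the choice made here is immaterial. *)
Definition inverse_of (s : cantor -> cantor) : cantor -> cantor :=
  epsilon (inhabits (fun x : cantor => x))
    (fun t => (forall x, s (t x) = x) /\ (forall x, t (s x) = x)).

Definition letters (S : list (cantor -> cantor)) : list (cantor -> cantor) :=
  S ++ map inverse_of S.

Lemma is_letter_in_letters S t : is_letter S t -> In t (letters S).
Proof.
  intros (s & Hs & [->|[st ts]]); apply in_or_app; [left; exact Hs|right].
  destruct (epsilon_spec (inhabits (fun x : cantor => x))
              (fun t => (forall x, s (t x) = x) /\ (forall x, t (s x) = x))
              (ex_intro _ t (conj st ts))) as [s_inv _].
  fold (inverse_of s) in s_inv.
  replace t with (inverse_of s); [apply in_map; exact Hs|].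
  apply functional_extensionality. intro x. rewrite <- (s_inv x) at 2. symmetry. apply ts.
Qed.

(* Words of length at most [n] are padded with the identity to length exactly [n]. *)
Lemma in_ball_in_words S n v :
  in_ball S n v -> In v (map eval_word (words ((fun x => x) :: letters S) n)).
Proof.
  intros (l & Hl & Hlen & ->).
  replace (eval_word l) with (eval_word (l ++ repeat (fun x => x) (n - length l))).
  - apply in_map, words_complete; [rewrite length_app, repeat_length; lia|].
    intros t Ht. apply in_app_or in Ht as [Ht|Ht].
    + right. apply is_letter_in_letters. rewrite Forall_forall in Hl. auto.
    + left. apply repeat_spec in Ht. auto.
  - rewrite eval_word_app. generalize (n - length l). intro k.
    induction k as [|k IH]; [reflexivity|]. exact IH.
Qed.

Lemma conj_count_exists S n : exists k, conj_count S n k.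
Proof.
  destruct (pairwise_unrelated_transversal conjV (in_ball S n) (fun x => x)
              conjV_refl conjV_sym (map eval_word (words ((fun x => x) :: letters S) n)))
    as (reps & Hin & Hpw & Hcov).
  exists (length reps), reps. repeat split; auto.
  intros v Hv. apply Hcov; [exact Hv|]. apply in_ball_in_words. exact Hv.
Qed.

Lemma conj_count_le S n k : conj_count S n k -> k <= (length (letters S) + 1) ^ n.
Proof.
  intros (reps & <- & Hin & Hpw & _).
  replace (length (letters S) + 1) with (length ((fun x : cantor => x) :: letters S)) by (simpl; lia).
  rewrite <- length_words, <- (length_map eval_word).
  apply NoDup_incl_length.
  - exact (pairwise_unrelated_NoDup conjV reps _ conjV_refl Hpw).
  - intros r Hr. apply in_ball_in_words. auto.
Qed.

Lemma conj_count_ge {A} S n k (L : list A) (F : A -> cantor -> cantor) :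
  conj_count S n k -> NoDup L -> (forall a, In a L -> in_ball S n (F a)) ->
  (forall a b, In a L -> In b L -> (forall j, has_period (F a) j <-> has_period (F b) j) -> a = b) ->
  length L <= k.
Proof.
  intros (reps & <- & _ & _ & Hcov) HL Hball Hsep.
  set (rep := fun a => epsilon (inhabits (fun x : cantor => x)) (fun r => In r reps /\ conjV (F a) r)).
  assert (Hrep : forall a, In a L -> In (rep a) reps /\ conjV (F a) (rep a)).
  { intros a Ha. apply epsilon_spec. apply Hcov. auto. }
  rewrite <- (length_map rep). apply NoDup_incl_length.
  - apply NoDup_map_NoDup_ForallPairs; [|exact HL]. intros a b Ha Hb E. apply Hsep; auto.
    intro j. rewrite (has_period_conjV _ _ j (proj2 (Hrep a Ha))),
                     (has_period_conjV _ _ j (proj2 (Hrep b Hb))), E.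
    reflexivity.
  - intros r Hr. apply in_map_iff in Hr as (a & <- & Ha). apply Hrep. exact Ha.
Qed.

Theorem mainTheorem8 :
  forall S : list (cantor -> cantor), generating_set S ->
    exists f : nat -> nat,
      (forall n, conj_count S n (f n)) /\ equiv_growth f (fun n => 2 ^ n).
Proof.
  intros S HS.
  destruct (choice (conj_count S) (conj_count_exists S)) as [f Hf].
  exists f. split; [exact Hf|split].
  - set (a := length (letters S) + 1). exists a. split; [lia|]. intro n.
    assert (a ^ n <= 2 ^ (a * n + a)).
    { apply (Nat.le_trans _ ((2 ^ a) ^ n)).
      - apply Nat.pow_le_mono_l, Nat.lt_le_incl, Nat.pow_gt_lin_r. lia.
      - rewrite <- Nat.pow_mul_r. apply Nat.pow_le_mono_r; lia. }
    pose proof (conj_count_le S n (f n) (Hf n)) as Hle. fold a in Hle. nia.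
  - destruct (in_ball_uniform S code_generators HS inV_code_generators) as [c Hc].
    set (lam := 3 * c + 1). exists lam. split; [lia|]. intro n.
    assert (2 ^ n <= f (lam * n + lam)).
    { change (2 ^ n) with (length [false; true] ^ n). rewrite <- (length_words [false; true] n).
      apply (conj_count_ge S _ _ _ code (Hf _)).
      - apply NoDup_words. repeat constructor; simpl; intuition discriminate.
      - intros l Hl. apply (in_ball_mono _ (c + 3 * c * length l)); [|apply code_in_ball, Hc].
        rewrite (length_in_words _ _ _ Hl). lia.
      - intros l l' Hl Hl' Hper. apply code_injective; [|intros k _; apply Hper].
        rewrite (length_in_words _ _ _ Hl), (length_in_words _ _ _ Hl'). reflexivity. }
    lia.
Qed.
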